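(* There is no left commutative T2R semigroup, i.e. no T2R semigroup satisfies the identity $xya=yxa$ for all $x,y,a$.
   Context: A semigroup $S$ is a $\Delta$-semigroup if the lattice of all congruences of $S$ is a chain with respect to inclusion. A semigroup $N$ with zero $0$ is nil if every element has some power equal to $0$; non-trivial means having more than one element. A T2R semigroup is a $\Delta$-semigroup $S$ which is the disjoint union of a non-trivial nil ideal $S_0$ (with zero $0$, which is then the zero of $S$) and a subsemigroup $S_1=\{u,v\}$, $u\neq v$, which is a right zero semigroup ($xy=y$ for $x,y\in S_1$). *)

From Stdlib Require Import Classical.

Definition associative_op {S : Type} (op : S -> S -> S) : Prop :=
  forall x y z, op x (op y z) = op (op x y) z.

Definition is_congruence {S : Type} (op : S -> S -> S) (R : S -> S -> Prop) : Prop :=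
  (forall x, R x x) /\
  (forall x y, R x y -> R y x) /\
  (forall x y z, R x y -> R y z -> R x z) /\
  (forall x y c, R x y -> R (op c x) (op c y) /\ R (op x c) (op y c)).

Definition is_Delta_semigroup {S : Type} (op : S -> S -> S) : Prop :=
  associative_op op /\
  forall R1 R2, is_congruence op R1 -> is_congruence op R2 ->
    (forall x y, R1 x y -> R2 x y) \/ (forall x y, R2 x y -> R1 x y).

(* spow op x n = x^(n+1) *)
Fixpoint spow {S : Type} (op : S -> S -> S) (x : S) (n : nat) : S :=
  match n with
  | O => x
  | Datatypes.S m => op x (spow op x m)
  end.

Definition is_T2R {S : Type} (op : S -> S -> S) : Prop :=
  is_Delta_semigroup op /\
  exists (S0 : S -> Prop) (z u v : S),
    u <> v /\
    (forall x, S0 x <-> (x <> u /\ x <> v)) /\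
    (forall x s, S0 s -> S0 (op x s) /\ S0 (op s x)) /\
    S0 z /\ (forall x, S0 x -> op z x = z /\ op x z = z) /\
    (forall x, S0 x -> exists n, spow op x n = z) /\
    (exists x, S0 x /\ x <> z) /\
    op u u = u /\ op u v = v /\ op v u = u /\ op v v = v.

Definition left_commutative_sg {S : Type} (op : S -> S -> S) : Prop :=
  forall x y a, op (op x y) a = op (op y x) a.

From Stdlib Require Import Classical.

(* Let S = S0 ∪ {u, v} be a T2R semigroup satisfying xya = yxa.  Applying the
   identity to (u, v, a) gives va = ua for every a.  We compare three
   congruences of S, which must be pairwise comparable since S is a
   Delta-semigroup:
   - the Rees congruence of the ideal S0 (collapse S0, nothing else);
   - the "left equivalence" x ~ y iff xa = ya for all a, which identifies u, v;
   - the relation identifying exactly u and v.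
   The left equivalence relates u and v while the Rees congruence does not, so
   the Rees congruence is the smaller one: every c in S0 acts on the left like
   the zero, hence S0·S = {z}.  This makes the identification of u and v a
   congruence.  It also relates u and v, so it must contain the Rees
   congruence; but then a nonzero element of S0 would be identified with z. *)

Definition rees {S : Type} (I : S -> Prop) (x y : S) : Prop :=
  x = y \/ (I x /\ I y).

Definition pair_rel {S : Type} (u v x y : S) : Prop :=
  x = y \/ (x = u /\ y = v) \/ (x = v /\ y = u).

Definition left_equiv {S : Type} (op : S -> S -> S) (x y : S) : Prop :=
  forall a, op x a = op y a.

Lemma rees_congruence {S : Type} (op : S -> S -> S) (I : S -> Prop) :
  (forall x s, I s -> I (op x s) /\ I (op s x)) ->
  is_congruence op (rees I).
Proof.
  intros ideal; unfold rees; split; [|split; [|split]].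
  - left; reflexivity.
  - intros x y [Exy | [Ix Iy]]; [left | right]; auto.
  - intros x y w [-> | [Ix Iy]] [-> | [Iy' Iw]]; auto.
  - intros x y c [-> | [Ix Iy]]; [split; left; reflexivity|].
    split; right; split.
    + exact (proj1 (ideal c x Ix)).
    + exact (proj1 (ideal c y Iy)).
    + exact (proj2 (ideal c x Ix)).
    + exact (proj2 (ideal c y Iy)).
Qed.

Lemma left_equiv_congruence {S : Type} (op : S -> S -> S) :
  associative_op op -> is_congruence op (left_equiv op).
Proof.
  intros assoc; unfold left_equiv; split; [|split; [|split]].
  - reflexivity.
  - intros x y Exy a; symmetry; apply Exy.
  - intros x y w Exy Eyw a; rewrite Exy; apply Eyw.
  - intros x y c Exy; split; intro a; rewrite <- !assoc; [rewrite Exy|apply Exy];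
      reflexivity.
Qed.

Lemma pair_rel_congruence {S : Type} (op : S -> S -> S) (u v : S) :
  (forall c, pair_rel u v (op c u) (op c v)) ->
  (forall c, pair_rel u v (op u c) (op v c)) ->
  is_congruence op (pair_rel u v).
Proof.
  intros left_stable right_stable.
  assert (pair_sym : forall x y, pair_rel u v x y -> pair_rel u v y x).
  { intros x y [-> | [[-> ->] | [-> ->]]]; unfold pair_rel; auto. }
  unfold pair_rel in *; split; [|split; [|split]].
  - left; reflexivity.
  - exact pair_sym.
  - intros x y w [-> | [[-> ->] | [-> ->]]] [<- | [[E ->] | [E ->]]]; auto.
  - intros x y c [-> | [[-> ->] | [-> ->]]].
    + split; left; reflexivity.
    + split; [apply left_stable | apply right_stable].
    + split; apply pair_sym; [apply left_stable | apply right_stable].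
Qed.

Lemma delta_separation {S : Type} (op : S -> S -> S) (R1 R2 : S -> S -> Prop)
  (x y : S) :
  is_Delta_semigroup op -> is_congruence op R1 -> is_congruence op R2 ->
  R1 x y -> ~ R2 x y -> forall a b, R2 a b -> R1 a b.
Proof.
  intros [_ chain] C1 C2 R1xy nR2xy.
  destruct (chain R1 R2 C1 C2) as [R1R2 | R2R1]; [|exact R2R1].
  exfalso; exact (nR2xy (R1R2 x y R1xy)).
Qed.

Section LeftCommutativeT2R.

Variables (S : Type) (op : S -> S -> S) (S0 : S -> Prop) (z u v : S).

Hypothesis delta : is_Delta_semigroup op.
Hypothesis u_neq_v : u <> v.
Hypothesis S0_complement : forall x, S0 x <-> (x <> u /\ x <> v).
Hypothesis S0_ideal : forall x s, S0 s -> S0 (op x s) /\ S0 (op s x).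
Hypothesis S0_z : S0 z.
Hypothesis z_left_zero : forall x, S0 x -> op z x = z.
Hypothesis uu : op u u = u.
Hypothesis uv : op u v = v.
Hypothesis vu : op v u = u.
Hypothesis vv : op v v = v.
Hypothesis left_comm : left_commutative_sg op.

Lemma u_notin_S0 : ~ S0 u.
Proof. intros Su; apply S0_complement in Su; tauto. Qed.

Lemma v_notin_S0 : ~ S0 v.
Proof. intros Sv; apply S0_complement in Sv; tauto. Qed.

Lemma rees_separates_u_v : ~ rees S0 u v.
Proof. intros [E | [Su _]]; [exact (u_neq_v E) | exact (u_notin_S0 Su)]. Qed.

(* From (uv)a = (vu)a: [u] and [v] act identically on the left. *)
Lemma u_v_left_equiv : left_equiv op u v.
Proof.
  intros a; pose proof (left_comm u v a) as uva_eq_vua.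
  rewrite uv, vu in uva_eq_vua; symmetry; exact uva_eq_vua.
Qed.

(* Comparing the left equivalence with the Rees congruence: every element of
   [S0] annihilates [S] on the left. *)
Lemma S0_left_annihilates : forall c a, S0 c -> op c a = z.
Proof.
  intros c a Sc.
  assert (c_equiv_z : left_equiv op c z).
  { apply (delta_separation op _ _ u v delta (left_equiv_congruence op (proj1 delta))
             (rees_congruence op S0 S0_ideal) u_v_left_equiv rees_separates_u_v).
    right; split; assumption. }
  rewrite (c_equiv_z a).
  (* za = (zz)a = z(za) = z, since za lies in the ideal [S0]. *)
  assert (za_in_S0 : S0 (op z a)) by apply (proj2 (S0_ideal a z S0_z)).
  rewrite <- (z_left_zero z S0_z) at 1.
  rewrite <- (proj1 delta); apply z_left_zero; exact za_in_S0.
Qed.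

Lemma pair_u_v_congruence : is_congruence op (pair_rel u v).
Proof.
  apply pair_rel_congruence.
  - intros c.
    destruct (classic (c = u)) as [-> | c_neq_u]; [rewrite uu, uv; right; left; auto|].
    destruct (classic (c = v)) as [-> | c_neq_v]; [rewrite vu, vv; right; left; auto|].
    assert (Sc : S0 c) by (apply S0_complement; auto).
    left; rewrite !S0_left_annihilates; auto.
  - intros c; left; exact (u_v_left_equiv c).
Qed.

(* The identification of [u] and [v] would contain the Rees congruence, which
   identifies a nonzero element of [S0] with [z]. *)
Lemma left_commutative_T2R_absurd : (exists x, S0 x /\ x <> z) -> False.
Proof.
  intros (x & Sx & x_neq_z).
  assert (pair_x_z : pair_rel u v x z).
  { apply (delta_separation op _ _ u v delta pair_u_v_congruence
             (rees_congruence op S0 S0_ideal)); [right; left; auto | exact rees_separates_u_v|].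
    right; split; assumption. }
  destruct pair_x_z as [E | [[-> _] | [-> _]]].
  - exact (x_neq_z E).
  - exact (u_notin_S0 Sx).
  - exact (v_notin_S0 Sx).
Qed.

End LeftCommutativeT2R.

Theorem mainTheorem10 (S : Type) (op : S -> S -> S) :
  is_T2R op -> ~ left_commutative_sg op.
Proof.
  intros [delta (S0 & z & u & v & u_neq_v & S0_complement & S0_ideal & S0_z &
                 z_zero & _ & nontrivial & uu & uv & vu & vv)] left_comm.
  exact (left_commutative_T2R_absurd S op S0 z u v delta u_neq_v S0_complement
           S0_ideal S0_z (fun x Sx => proj1 (z_zero x Sx)) uu uv vu vv left_comm
           nontrivial).
Qed.
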